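(* Let $k\geq3$ be an integer, let $N,M\geq0$ be integers, and let $a_1,\dots,a_N,b_1,\dots,b_M\in\{0,k-1\}$. Let $u=0a_1\cdots a_N$ and $v=(k-1)b_1\cdots b_M$ (words of lengths $N+1$ and $M+1$). For a word $w=w_1\cdots w_L$ over $\{0,k-1\}$ set $$I_w=\left[\sum_{n=1}^L\frac{w_n}{k^n}+\frac{1}{k^{L+1}},\ \sum_{n=1}^L\frac{w_n}{k^n}+\frac{k-1}{k^{L+1}}\right].$$ Then $d_k(a,b)$ takes the same value for all $(a,b)\in I_u\times I_v$.
   Context: $T_k:[0,1)\to[0,1)$ is $T_k(x)=kx\bmod1$; for $0\leq a<b\leq1$, $\mathcal{W}_k(a,b)=\{x\in[0,1)\ :\ T_k^n(x)\notin(a,b)\ \forall n\geq0\}$ and $d_k(a,b)$ is its Hausdorff dimension. (For such $u,v$ one has $I_u\subseteq[0,\frac1k)$ and $I_v\subseteq(\frac{k-1}{k},1)$.) *)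

From Stdlib Require Import Reals List.
From Coquelicot Require Import Coquelicot.
Open Scope R_scope.

Definition Tk (k : nat) (x : R) : R := frac_part (INR k * x).

Definition Wk (k : nat) (a b : R) : R -> Prop :=
  fun x => 0 <= x < 1 /\ forall n : nat, ~ (a < Nat.iter n (Tk k) x < b).

(* Diameter of a subset of R: sup |x - y|; the empty set has diameter 0
   (Lub_Rbar of the empty set is -oo, whose [real] is 0). Only used for
   sets whose Lub is finite (see [delta_cover]). *)
Definition diam_Rbar (U : R -> Prop) : Rbar :=
  Lub_Rbar (fun r => exists x y, U x /\ U y /\ r = Rabs (x - y)).
Definition diam (U : R -> Prop) : R := real (diam_Rbar U).

Definition dpow (d s : R) : R := if Rle_dec d 0 then 0 else Rpower d s.

Definition delta_cover (delta : R) (E : R -> Prop) (U : nat -> R -> Prop) : Prop :=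
  (forall x, E x -> exists i, U i x) /\
  (forall i, Rbar_le (diam_Rbar (U i)) (Finite delta)).

(* H^s_delta(E) = inf { sum_i diam(U_i)^s : (U_i) delta-cover of E }
   (covers with divergent sums contribute +oo, hence are irrelevant) *)
Definition Hdelta (s delta : R) (E : R -> Prop) : Rbar :=
  Glb_Rbar (fun x => exists U, delta_cover delta E U /\
                               is_series (fun i => dpow (diam (U i)) s) x).

Definition Hmeasure (s : R) (E : R -> Prop) : Rbar :=
  Lub_Rbar (fun y => exists delta, 0 < delta /\ Rbar_le (Finite y) (Hdelta s delta E)).

Definition hdim (E : R -> Prop) : Rbar :=
  Glb_Rbar (fun s => 0 < s /\ Hmeasure s E = Finite 0).

Definition dk (k : nat) (a b : R) : Rbar := hdim (Wk k a b).

(* value of a word w_1...w_L : sum_{n=1}^L w_n / k^n *)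
Fixpoint wordval (k : nat) (w : list nat) : R :=
  match w with
  | nil => 0
  | c :: w' => (INR c + wordval k w') / INR k
  end.

Definition in_Iw (k : nat) (w : list nat) (x : R) : Prop :=
  wordval k w + 1 / INR k ^ (S (length w)) <= x <=
  wordval k w + (INR k - 1) / INR k ^ (S (length w)).

(** The sets [W_k(a,b)] themselves do not depend on [(a,b) ∈ I_u × I_v].
    Multiplication by [k^|w|] modulo 1 maps [I_w] onto [[1/k, (k-1)/k]], and
    [a < 1/k], [(k-1)/k < b] because [u] starts with [0] and [v] with [k-1].
    So if an orbit avoiding [(a,b)] met a point [y] between [a'] and [a], then
    [y ∈ I_u] and [|u|] steps later the orbit would be inside [(a,b)];
    symmetrically between [b] and [b']. *)
From Stdlib Require Import Reals List Lra Lia.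
From Stdlib Require Import FunctionalExtensionality PropExtensionality.
From Coquelicot Require Import Coquelicot.
Open Scope R_scope.

Definition is_digit_word (k : nat) (w : list nat) : Prop :=
  List.Forall (fun c => (c < k)%nat) w.

Lemma frac_part_INR_plus (c : nat) (t : R) :
  0 <= t < 1 -> frac_part (INR c + t) = t.
Proof.
  intros Ht; symmetry.
  apply (Int_part_frac_part_spec _ (Z.of_nat c) t Ht).
  now rewrite <- INR_IZR_INZ.
Qed.

Section Words.

Variable k : nat.
Hypothesis k_gt0 : (0 < k)%nat.

Let INR_k_gt0 : 0 < INR k.
Proof. now apply lt_0_INR. Qed.

Let pow_k_gt0 (n : nat) : 0 < INR k ^ n.
Proof. now apply pow_lt. Qed.

Lemma wordval_bounds (w : list nat) : is_digit_word k w ->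
  0 <= wordval k w <= 1 - 1 / INR k ^ length w.
Proof.
  induction 1 as [|c w Hc _ [IH0 IH1]]; simpl; [lra|].
  assert (Hck : INR c + 1 <= INR k) by (rewrite <- S_INR; apply le_INR; lia).
  pose proof (pos_INR c); pose proof (pow_k_gt0 (length w)).
  assert (E : 1 - 1 / (INR k * INR k ^ length w)
              = (INR k - 1 / INR k ^ length w) / INR k) by (field; lra).
  rewrite E; split.
  - apply Rdiv_le_0_compat; lra.
  - apply Rmult_le_compat_r; [apply Rlt_le, Rinv_0_lt_compat|]; lra.
Qed.

Lemma iter_Tk_wordval (w : list nat) (t : R) : is_digit_word k w -> 0 <= t < 1 ->
  Nat.iter (length w) (Tk k) (wordval k w + t / INR k ^ length w) = t.
Proof.
  intros Hw Ht; induction Hw as [|c w _ Hw IH]; simpl length.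
  - simpl; field.
  - rewrite Nat.iter_succ_r; rewrite <- IH at 2; f_equal.
    pose proof (wordval_bounds w Hw); pose proof (pow_k_gt0 (length w)).
    pose proof (Rinv_0_lt_compat _ (pow_k_gt0 (length w))).
    assert (Hst : 0 <= t / INR k ^ length w < 1 / INR k ^ length w).
    { unfold Rdiv; split; [apply Rmult_le_pos | apply Rmult_lt_compat_r]; lra. }
    unfold Tk; simpl.
    replace (INR k * ((INR c + wordval k w) / INR k + t / (INR k * INR k ^ length w)))
      with (INR c + (wordval k w + t / INR k ^ length w)) by (field; lra).
    apply frac_part_INR_plus; lra.
Qed.

Lemma iter_Tk_in_Iw (w : list nat) (x : R) : is_digit_word k w -> in_Iw k w x ->
  1 / INR k <= Nat.iter (length w) (Tk k) x <= (INR k - 1) / INR k.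
Proof.
  intros Hw [Hlo Hhi]; simpl in Hlo, Hhi.
  pose proof (pow_k_gt0 (length w)).
  assert (Ht : 1 / INR k <= (x - wordval k w) * INR k ^ length w <= (INR k - 1) / INR k).
  { replace (1 / INR k) with (1 / (INR k * INR k ^ length w) * INR k ^ length w)
      by (field; lra).
    replace ((INR k - 1) / INR k)
      with ((INR k - 1) / (INR k * INR k ^ length w) * INR k ^ length w) by (field; lra).
    split; apply Rmult_le_compat_r; lra. }
  replace x with (wordval k w + (x - wordval k w) * INR k ^ length w / INR k ^ length w)
    by (field; lra).
  assert (0 < 1 / INR k) by (apply Rdiv_lt_0_compat; lra).
  assert ((INR k - 1) / INR k = 1 - 1 / INR k) by (field; lra).
  rewrite iter_Tk_wordval by (exact Hw || lra); lra.
Qed.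

Lemma in_Iw_cons_bounds (c : nat) (w : list nat) (x : R) :
  is_digit_word k w -> in_Iw k (c :: w) x -> INR c / INR k < x < (INR c + 1) / INR k.
Proof.
  intros Hw [Hlo Hhi]; simpl in Hlo, Hhi.
  pose proof (wordval_bounds w Hw); pose proof (pow_k_gt0 (length w)).
  assert (0 < 1 / (INR k * (INR k * INR k ^ length w))).
  { apply Rdiv_lt_0_compat; [lra|]; repeat apply Rmult_lt_0_compat; lra. }
  assert (INR c / INR k <= (INR c + wordval k w) / INR k).
  { apply Rmult_le_compat_r; [apply Rlt_le, Rinv_0_lt_compat|]; lra. }
  assert ((INR c + wordval k w) / INR k + (INR k - 1) / (INR k * (INR k * INR k ^ length w))
          = (INR c + 1) / INR k
            - (1 - 1 / INR k ^ length w - wordval k w) / INR k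
            - 1 / (INR k * (INR k * INR k ^ length w))) by (field; lra).
  assert (0 <= (1 - 1 / INR k ^ length w - wordval k w) / INR k).
  { apply Rdiv_le_0_compat; lra. }
  lra.
Qed.

End Words.

Lemma Wk_incl_of_return (k m n : nat) (a b a' b' : R) :
  (forall y, a' < y <= a -> a < Nat.iter m (Tk k) y < b) ->
  (forall y, b <= y < b' -> a < Nat.iter n (Tk k) y < b) ->
  forall x, Wk k a b x -> Wk k a' b' x.
Proof.
  intros Hleft Hright x [Hx Hav]; split; [exact Hx|].
  intros j Hj; set (y := Nat.iter j (Tk k) x) in Hj.
  destruct (Rle_dec y a) as [Hya|Hya]; [|destruct (Rle_dec b y) as [Hby|Hby]].
  - apply (Hav (m + j)%nat); rewrite Nat.iter_add; apply Hleft; fold y; lra.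
  - apply (Hav (n + j)%nat); rewrite Nat.iter_add; apply Hright; fold y; lra.
  - apply (Hav j); fold y; lra.
Qed.

Lemma Wk_incl_in_Iw (k : nat) (u v : list nat) (a b a' b' : R) :
  (0 < k)%nat -> is_digit_word k u -> is_digit_word k v ->
  a < 1 / INR k -> (INR k - 1) / INR k < b ->
  in_Iw k u a -> in_Iw k u a' -> in_Iw k v b -> in_Iw k v b' ->
  forall x, Wk k a b x -> Wk k a' b' x.
Proof.
  intros Hk Hu Hv Ha Hb [Ia0 Ia1] [Ia0' Ia1'] [Ib0 Ib1] [Ib0' Ib1'].
  apply (Wk_incl_of_return _ (length u) (length v)); intros y Hy.
  - assert (Iy : in_Iw k u y) by (split; lra).
    pose proof (iter_Tk_in_Iw k Hk u y Hu Iy); lra.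
  - assert (Iy : in_Iw k v y) by (split; lra).
    pose proof (iter_Tk_in_Iw k Hk v y Hv Iy); lra.
Qed.

Lemma dk_ext (k : nat) (a b a' b' : R) :
  (forall x, Wk k a b x <-> Wk k a' b' x) -> dk k a b = dk k a' b'.
Proof.
  intros HW; unfold dk; f_equal.
  apply functional_extensionality; intros x; apply propositional_extensionality, HW.
Qed.

Theorem mainTheorem9 :
  forall (k : nat), (3 <= k)%nat ->
  forall (as_ bs : list nat),
    List.Forall (fun c => c = 0%nat \/ c = (k - 1)%nat) as_ ->
    List.Forall (fun c => c = 0%nat \/ c = (k - 1)%nat) bs ->
    forall a b a' b' : R,
      in_Iw k (0%nat :: as_) a -> in_Iw k ((k - 1)%nat :: bs) b ->
      in_Iw k (0%nat :: as_) a' -> in_Iw k ((k - 1)%nat :: bs) b' ->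
      dk k a b = dk k a' b'.
Proof.
  intros k Hk as_ bs Has Hbs a b a' b' Ia Ib Ia' Ib'.
  assert (Hk0 : (0 < k)%nat) by lia.
  assert (Hdigit : forall c, c = 0%nat \/ c = (k - 1)%nat -> (c < k)%nat) by lia.
  assert (Hu : is_digit_word k (0%nat :: as_))
    by (constructor; [lia | exact (Forall_impl _ Hdigit Has)]).
  assert (Hv : is_digit_word k ((k - 1)%nat :: bs))
    by (constructor; [lia | exact (Forall_impl _ Hdigit Hbs)]).
  assert (Hkm1 : INR (k - 1) = INR k - 1) by (rewrite minus_INR by lia; reflexivity).
  assert (Hsmall : forall x, in_Iw k (0%nat :: as_) x -> x < 1 / INR k).
  { intros x Ix; pose proof (in_Iw_cons_bounds k Hk0 _ _ x (Forall_inv_tail Hu) Ix).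
    simpl INR in *; lra. }
  assert (Hbig : forall x, in_Iw k ((k - 1)%nat :: bs) x -> (INR k - 1) / INR k < x).
  { intros x Ix; pose proof (in_Iw_cons_bounds k Hk0 _ _ x (Forall_inv_tail Hv) Ix).
    rewrite Hkm1 in *; lra. }
  apply dk_ext; split; apply (Wk_incl_in_Iw k (0%nat :: as_) ((k - 1)%nat :: bs));
    auto.
Qed.
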